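(* Let $N\ge0$ be an integer, take $\tau_1=1$, $\tau_2=-1$, $\tau_3=-2N-2-\alpha-\beta$ and $\tau_0$ arbitrary, so that $M=XL-LX+\tau_3X+\tau_0=2x(x-1)\partial_x+(\alpha+\beta+\tau_3+2)x+\tau_0-\alpha-1$. Then $L$ and $M$ preserve the space of polynomials of degree $\le N$; the polynomials $\psi_n(x)=x^n(1-x)^{N-n}$, $n=0,\dots,N$, satisfy $M\psi_n=(\tau_0-2n-\alpha-1)\psi_n$; and $$L\psi_n=(N-n)(N-n+\beta)\psi_{n+1}+\big(2n^2+(\alpha-\beta-2N)n-(\alpha+1)N\big)\psi_n+n(n+\alpha)\psi_{n-1},$$ with $\psi_{-1}:=0$, $\psi_{N+1}:=0$.
   Context: $L=x(1-x)\partial_x^2+\big(\alpha+1-(\alpha+\beta+2)x\big)\partial_x$ with real $\alpha,\beta>-1$, and $X$ is multiplication by $x$. *)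

From HB Require Import structures.
From mathcomp Require Import all_boot all_order all_algebra.
Set Implicit Arguments. Unset Strict Implicit. Unset Printing Implicit Defensive.
Import Order.TTheory GRing.Theory Num.Theory.
Local Open Scope ring_scope.

Definition Lop (R : realFieldType) (alpha beta : R) (p : {poly R}) : {poly R} :=
  'X * (1 - 'X) * p^`(2) + ((alpha + 1)%:P - (alpha + beta + 2) *: 'X) * p^`().

Definition Xop (R : realFieldType) (p : {poly R}) : {poly R} := 'X * p.

Definition Mop (R : realFieldType) (alpha beta tau3 tau0 : R) (p : {poly R}) : {poly R} :=
  Xop (Lop alpha beta p) - Lop alpha beta (Xop p) + tau3 *: Xop p + tau0 *: p.

(* psi_n = x^n (1-x)^(N-n) for n <= N, and psi_n := 0 for n > N (so psi_(N+1) = 0) *)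
Definition psi (R : realFieldType) (N n : nat) : {poly R} :=
  if (n <= N)%N then 'X^n * (1 - 'X) ^+ (N - n) else 0.

(* Write psi_n = A * B with A = x^n and B = (1-x)^(N-n). These are eigenfunctions
   of the first-order operators x d/dx and (1-x) d/dx, with eigenvalues n and
   -(N-n), so x(1-x) psi_n' and x^2 (1-x)^2 psi_n'' are psi_n times explicit
   polynomials of degree <= 2. This makes M diagonal on the psi_n; for L, one
   multiplies the claimed relation by x(1-x) and uses x psi_n = (1-x) psi_(n+1),
   which turns it into an identity between quadratic polynomials.
   L preserves degrees because its coefficients have degrees <= 2 and <= 1; for
   M the choice of tau3 makes the top-degree part 2x (x d/dx - N), which kills
   x^N. *)

From HB Require Import structures.
From mathcomp Require Import all_boot all_order all_algebra.
From mathcomp Require Import ring zify.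
Import Order.TTheory GRing.Theory Num.Theory.
Set Implicit Arguments.
Unset Strict Implicit.
Unset Printing Implicit Defensive.

Local Open Scope ring_scope.

Section JacobiOperator.
Variable R : realFieldType.
Implicit Types (p q l : {poly R}) (c d : R).

Lemma size_derivn_le p k : (size p^`(k) <= size p - k)%N.
Proof.
apply/leq_sizeP => i hi; rewrite coef_derivn nth_default ?mul0rn //.
by rewrite -leq_subLR.
Qed.

Lemma size_mul_derivn_le l p k :
  (size l <= k.+1)%N -> (size (l * p^`(k))%R <= size p)%N.
Proof.
move=> hl; case: (leqP (size p) k) => hk.
  by rewrite derivn_poly0 // mulr0 size_poly0.
apply: leq_trans (size_polyMleq _ _) _.
have := size_derivn_le p k; lia.
Qed.

Lemma size_euler_sub_le p N :
  (size p <= N.+1)%N -> (size ('X * p^`() - N%:R *: p)%R <= N)%N.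
Proof.
move=> hp; apply/leq_sizeP => -[|i] hi; rewrite coefB coefXM coef_deriv coefZ /=.
  by move: hi; rewrite leqn0 => /eqP ->; rewrite mul0r subr0.
have [<-|neq] := eqVneq N i.+1; first by rewrite mulr_natl subrr.
by rewrite nth_default ?mul0rn ?mulr0 ?subr0 // (leq_trans hp) // ltn_neqAle neq hi.
Qed.

Lemma mulX_derivXn n : 'X * ('X^n)^`() = n%:R *: 'X^n :> {poly R}.
Proof.
rewrite derivXn; case: n => [|n]; first by rewrite mulr0n mulr0 scale0r.
by rewrite mulrnAr -exprS -scaler_nat.
Qed.

Lemma mul1subX_deriv_exp m :
  (1 - 'X) * ((1 - 'X) ^+ m)^`() = - m%:R *: (1 - 'X) ^+ m :> {poly R}.
Proof.
rewrite deriv_exp derivB derivC derivX sub0r; case: m => [|m].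
  by rewrite mulr0n mulr0 scaleNr scale0r oppr0.
by rewrite mulrnAr /= mulN1r mulrN -exprS scaleNr scaler_nat mulNrn.
Qed.

Lemma euler_derivn2 l q c d :
  l^`() = d%:P -> l * q^`() = c *: q -> l * (l * q^`(2)) = (c * (c - d)) *: q.
Proof.
move=> hl hq; have := congr1 deriv hq; rewrite derivM hl derivZ => hq'.
have lq2 : l * q^`(2) = (c - d) *: q^`().
  rewrite scalerBl -hq' -mul_polyC; ring.
by rewrite lq2 -scalerAr hq scalerA mulrC.
Qed.

Section EulerProduct.
Variables (A B : {poly R}) (a b : R).
Hypotheses (hA : 'X * A^`() = a *: A) (hB : (1 - 'X) * B^`() = b *: B).

Lemma deriv_euler_mul :
  'X * (1 - 'X) * (A * B)^`() = (a *: (1 - 'X) + b *: 'X) * (A * B).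
Proof.
rewrite derivM.
transitivity ((1 - 'X) * ('X * A^`()) * B + 'X * A * ((1 - 'X) * B^`())); first ring.
by rewrite hA hB -!mul_polyC; ring.
Qed.

Lemma derivn2_euler_mul :
  ('X * (1 - 'X)) ^+ 2 * (A * B)^`(2) =
  ((a * (a - 1)) *: (1 - 'X) ^+ 2 + (2 * a * b) *: ('X * (1 - 'X))
     + (b * (b + 1)) *: 'X ^+ 2) * (A * B).
Proof.
have hA2 : 'X * ('X * A^`()^`()) = (a * (a - 1)) *: A.
  by apply: euler_derivn2 hA; rewrite derivX.
have hB2 : (1 - 'X) * ((1 - 'X) * B^`()^`()) = (b * (b - -1)) *: B.
  by apply: euler_derivn2 hB; rewrite derivB derivC derivX sub0r polyCN.
rewrite [_^`(2)]/= derivM derivD !derivM.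
transitivity ((1 - 'X) ^+ 2 * ('X * ('X * A^`()^`())) * B
   + 2%:R * ('X * A^`()) * ((1 - 'X) * B^`()) * ('X * (1 - 'X))
   + 'X ^+ 2 * A * ((1 - 'X) * ((1 - 'X) * B^`()^`()))); first ring.
by rewrite hA hB hA2 hB2 -!mul_polyC; ring.
Qed.

Lemma Lop_euler_mul alpha beta :
  'X * (1 - 'X) * Lop alpha beta (A * B) =
  ((a * (a - 1)) *: (1 - 'X) ^+ 2 + (2 * a * b) *: ('X * (1 - 'X))
     + (b * (b + 1)) *: 'X ^+ 2
   + ((alpha + 1)%:P - (alpha + beta + 2) *: 'X) * (a *: (1 - 'X) + b *: 'X))
  * (A * B).
Proof.
rewrite /Lop.
transitivity (('X * (1 - 'X)) ^+ 2 * (A * B)^`(2)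
   + ((alpha + 1)%:P - (alpha + beta + 2) *: 'X) * ('X * (1 - 'X) * (A * B)^`())).
  ring.
by rewrite derivn2_euler_mul deriv_euler_mul; ring.
Qed.

End EulerProduct.

Lemma MopE alpha beta tau3 tau0 p :
  Mop alpha beta tau3 tau0 p = 2%:R *: ('X * ('X - 1)) * p^`()
    + ((alpha + beta + tau3 + 2) *: 'X + (tau0 - alpha - 1)%:P) * p.
Proof.
rewrite /Mop /Xop /Lop !derivnS !derivE -!mul_polyC !polyCB !polyCD polyC1.
ring.
Qed.

Lemma size_mulX_le p : (size ('X * p)%R <= (size p).+1)%N.
Proof. by apply: leq_trans (size_polyMleq _ _) _; rewrite size_polyX. Qed.

Lemma size_Lop_le alpha beta p n :
  (size p <= n)%N -> (size (Lop alpha beta p) <= n)%N.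
Proof.
move=> hp; apply: leq_trans (size_polyD _ _) _; rewrite geq_max.
apply/andP; split; apply: leq_trans hp.
  apply: size_mul_derivn_le; apply/leq_sizeP => -[|[|[|i]]] // _.
  by rewrite coefXM coefB coef1 coefX subr0.
rewrite -derivn1; apply: size_mul_derivn_le; apply/leq_sizeP => -[|[|i]] // _.
by rewrite coefB coefC coefZ coefX mulr0 subr0.
Qed.

Lemma size_Mop_le alpha beta tau0 N p :
  (size p <= N.+1)%N ->
  (size (Mop alpha beta (- (2 * N%:R + 2) - alpha - beta) tau0 p) <= N.+1)%N.
Proof.
move=> hp; rewrite MopE.
have -> : alpha + beta + (- (2 * N%:R + 2) - alpha - beta) + 2 = - (2 * N%:R) by ring.
have -> : 2%:R *: ('X * ('X - 1)) * p^`()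
      + ((- (2 * N%:R)) *: 'X + (tau0 - alpha - 1)%:P) * p =
    2%:R *: ('X * ('X * p^`() - N%:R *: p - p^`())) + (tau0 - alpha - 1) *: p.
  by rewrite -!mul_polyC !polyCN !polyCM; ring.
apply: leq_trans (size_polyD _ _) _; rewrite geq_max.
apply/andP; split; last exact: leq_trans (size_scale_leq _ _) hp.
apply: leq_trans (size_scale_leq _ _) _; apply: leq_trans (size_mulX_le _) _.
rewrite ltnS; apply: leq_trans (size_polyD _ _) _; rewrite geq_max size_euler_sub_le //=.
by rewrite size_polyN; apply: leq_trans (size_derivn_le p 1) _; rewrite leq_subLR.
Qed.

Lemma psi_le N n : (n <= N)%N -> psi R N n = 'X^n * (1 - 'X) ^+ (N - n).
Proof. by rewrite /psi => ->. Qed.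

Lemma psi_shift N n : (n < N)%N -> 'X * psi R N n = (1 - 'X) * psi R N n.+1.
Proof.
move=> hn; rewrite !psi_le ?(ltnW hn) //.
have -> : (N - n = (N - n.+1).+1)%N by lia.
by rewrite !exprS; ring.
Qed.

Lemma mulX1subX_neq0 : 'X * (1 - 'X) != 0 :> {poly R}.
Proof.
by rewrite mulf_neq0 ?polyX_eq0 // -opprB oppr_eq0 -polyC1 polyXsubC_eq0.
Qed.

Lemma Mop_psi alpha beta tau0 N n : (n <= N)%N ->
  Mop alpha beta (- (2 * N%:R + 2) - alpha - beta) tau0 (psi R N n)
  = (tau0 - 2 * n%:R - alpha - 1) *: psi R N n.
Proof.
move=> hn; rewrite MopE psi_le //.
transitivity (- 2%:R *: ('X * (1 - 'X) * ('X^n * (1 - 'X) ^+ (N - n))^`())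
   + ((- (2 * N%:R)) *: 'X + (tau0 - alpha - 1)%:P) * ('X^n * (1 - 'X) ^+ (N - n))).
  by rewrite -!mul_polyC !polyCN !polyCM !polyCB !polyCD polyC1; ring.
rewrite (deriv_euler_mul (mulX_derivXn n) (mul1subX_deriv_exp _)) natrB //.
by rewrite -!mul_polyC !polyCN !polyCM !polyCB !polyCD polyC1; ring.
Qed.

Lemma Lop_psi alpha beta N n : (n <= N)%N ->
  Lop alpha beta (psi R N n) =
    ((N - n)%N%:R * ((N - n)%N%:R + beta)) *: psi R N n.+1
    + (2 * n%:R ^+ 2 + (alpha - beta - 2 * N%:R) * n%:R - (alpha + 1) * N%:R)
        *: psi R N n
    + (if (0 < n)%N then (n%:R * (n%:R + alpha)) *: psi R N n.-1 else 0).
Proof.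
move=> hn; apply: (mulfI mulX1subX_neq0).
have shift_down :
    'X * (1 - 'X) * (if (0 < n)%N then (n%:R * (n%:R + alpha)) *: psi R N n.-1 else 0) =
    (n%:R * (n%:R + alpha)) *: ((1 - 'X) ^+ 2 * psi R N n).
  case: n hn => [|k] hk /=; first by rewrite mulr0 mul0r scale0r.
  by rewrite -scalerAr [_ * (1 - 'X)]mulrC -mulrA psi_shift // mulrA -expr2.
have shift_up c : 'X * (1 - 'X) * (((N - n)%N%:R * c) *: psi R N n.+1)
    = ((N - n)%N%:R * c) *: ('X ^+ 2 * psi R N n).
  case: (ltnP n N) => [ltnN | geNn].
    by rewrite -!scalerAr -mulrA -psi_shift // mulrA -expr2.
  have -> : (N - n)%N = 0%N by apply/eqP; rewrite subn_eq0.
  by rewrite mul0r !scale0r mulr0.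
rewrite [in RHS]mulrDr [in RHS]mulrDr shift_up shift_down psi_le //.
rewrite (Lop_euler_mul (mulX_derivXn n) (mul1subX_deriv_exp _)) natrB //.
by rewrite -!mul_polyC !polyCN !polyCM !polyCB !polyCD polyC1; ring.
Qed.

End JacobiOperator.

Theorem mainTheorem9 (R : realFieldType) (alpha beta tau0 : R) (N : nat)
  (halpha : -1 < alpha) (hbeta : -1 < beta) :
  let tau3 := - (2 * N%:R + 2) - alpha - beta in
  let L := Lop alpha beta in
  let M := Mop alpha beta tau3 tau0 in
  (forall p : {poly R},
     M p = 2%:R *: ('X * ('X - 1)) * p^`()
           + ((alpha + beta + tau3 + 2) *: 'X + (tau0 - alpha - 1)%:P) * p) /\
  (forall p : {poly R}, (size p <= N.+1)%N ->
     (size (L p) <= N.+1)%N /\ (size (M p) <= N.+1)%N) /\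
  (forall n : nat, (n <= N)%N ->
     M (psi R N n) = (tau0 - 2 * n%:R - alpha - 1) *: psi R N n) /\
  (forall n : nat, (n <= N)%N ->
     L (psi R N n) =
       ((N - n)%N%:R * ((N - n)%N%:R + beta)) *: psi R N n.+1
       + (2 * n%:R ^+ 2 + (alpha - beta - 2 * N%:R) * n%:R - (alpha + 1) * N%:R)
           *: psi R N n
       + (if (0 < n)%N then (n%:R * (n%:R + alpha)) *: psi R N n.-1 else 0)).
Proof.
move=> tau3 L M.
split; first exact: MopE.
split; first by move=> p hp; split; [exact: size_Lop_le | exact: size_Mop_le].
by split=> n hn; [exact: Mop_psi | exact: Lop_psi].
Qed.
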